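(* Let $\mathbb{S}^2=\{\boldsymbol{x}\in\mathbb{R}^3:\boldsymbol{x}^\top\boldsymbol{x}=1\}$ and let $\{b_n:n\in\mathbb{N}_0\}$ be a sequence of nonnegative functions $b_n:\mathbb{S}^2\to[0,\infty)$ such that $\sum_{n=0}^\infty b_n(\boldsymbol{x})<\infty$ for every $\boldsymbol{x}\in\mathbb{S}^2$. Define $$C(\boldsymbol{x}_1,\boldsymbol{x}_2)=\sum_{n=0}^\infty \{b_n(\boldsymbol{x}_1)b_n(\boldsymbol{x}_2)\}^{1/2}P_n(\boldsymbol{x}_1^\top\boldsymbol{x}_2),\qquad \boldsymbol{x}_1,\boldsymbol{x}_2\in\mathbb{S}^2.$$ Then $C$ is semi positive definite: for every $k\in\mathbb{N}$, all $\boldsymbol{x}_1,\dots,\boldsymbol{x}_k\in\mathbb{S}^2$ and all $a_1,\dots,a_k\in\mathbb{R}$, $$\sum_{i=1}^k\sum_{j=1}^k a_ia_jC(\boldsymbol{x}_i,\boldsymbol{x}_j)\ge 0.$$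
   Context: $P_n$ denotes the Legendre polynomial of degree $n$ (normalized so that $P_n(1)=1$). *)

From Stdlib Require Import Reals Lra.
From Coquelicot Require Import Coquelicot.
Open Scope R_scope.

Definition R3 := (R * R * R)%type.
Definition dot3 (x y : R3) : R :=
  let '(x1, x2, x3) := x in let '(y1, y2, y3) := y in x1*y1 + x2*y2 + x3*y3.
Definition on_sphere (x : R3) : Prop := dot3 x x = 1.

(* Legendre polynomials via Bonnet's recurrence (normalized P_n(1) = 1):
   P_0 = 1, P_1 = t, (n+2) P_{n+2} = (2n+3) t P_{n+1} - (n+1) P_n. *)
Fixpoint legendre_pair (n : nat) (t : R) : R * R :=
  match n with
  | O => (1, t)
  | S m => let '(p, q) := legendre_pair m t in
           (q, ((2 * INR m + 3) * t * q - (INR m + 1) * p) / (INR m + 2))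
  end.
Definition legendre (n : nat) (t : R) : R := fst (legendre_pair n t).

Definition Ccov (b : nat -> R3 -> R) (x1 x2 : R3) : R :=
  Series (fun n => sqrt (b n x1 * b n x2) * legendre n (dot3 x1 x2)).

From Stdlib Require Import Reals Lra Lia Factorial.
From Coquelicot Require Import Coquelicot.
Open Scope R_scope.

(* Each term of the series defining C is sqrt (b_n x) sqrt (b_n y) P_n (x . y), a
   rescaling of the Legendre kernel (x, y) |-> P_n (x . y); so C is positive
   semidefinite as soon as these kernels are and the series may be summed termwise.
   The latter holds since |P_n (x . y)| <= 1 and
   sqrt (b_n x b_n y) <= (b_n x + b_n y) / 2.

   Positivity of the Legendre kernel is the addition theorem: writing a point as
   (z, s) with z complex, s real and |z|^2 = 1 - s^2,
     P_n (x . y) = sum_(m <= n) w_(n,m) P_n^(m) (s) P_n^(m) (t) Re (z^m conj u^m)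
   for x = (z, s), y = (u, t), where w_(n,0) = 1 and w_(n,m) = 2 (n-m)!/(n+m)!.
   Since Re (z^m conj u^m) = Re z^m Re u^m + Im z^m Im u^m, this is a nonnegative
   combination of rank-one kernels.  The addition theorem holds because its right-hand
   side satisfies Bonnet's recurrence, which is checked coefficient by coefficient in
   the family Re (zeta^m), zeta = z conj u.  The bound |P_n| <= 1 is positivity for
   two points. *)

(** * Positive semidefinite kernels *)

Lemma ex_series_sum_f_R0 (F : nat -> nat -> R) k :
  (forall i, (i <= k)%nat -> ex_series (F i)) ->
  ex_series (fun n => sum_f_R0 (fun i => F i n) k).
Proof.
  induction k as [|k IH]; intro HF; [apply HF; lia|].
  apply (ex_series_plus (V := R_NormedModule)); [apply IH; intros|]; apply HF; lia.
Qed.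

Lemma Series_sum_f_R0 (F : nat -> nat -> R) k :
  (forall i, (i <= k)%nat -> ex_series (F i)) ->
  sum_f_R0 (fun i => Series (F i)) k = Series (fun n => sum_f_R0 (fun i => F i n) k).
Proof.
  induction k as [|k IH]; intro HF; [reflexivity|].
  simpl; rewrite Series_plus, IH; [reflexivity| |apply ex_series_sum_f_R0|]; intros;
    apply HF; lia.
Qed.

Definition psd_on {T : Type} (P : T -> Prop) (K : T -> T -> R) : Prop :=
  forall (k : nat) (x : nat -> T) (c : nat -> R),
  (forall i, (i <= k)%nat -> P (x i)) ->
  0 <= sum_f_R0 (fun i => sum_f_R0 (fun j => c i * c j * K (x i) (x j)) k) k.

Section PsdKernels.

Context {T : Type} (P : T -> Prop).

Lemma psd_on_ext (K L : T -> T -> R) :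
  (forall x y, P x -> P y -> K x y = L x y) -> psd_on P L -> psd_on P K.
Proof.
  intros KL HL k x c Hx.
  erewrite sum_eq; [apply (HL k x c Hx)|]; intros i Hi.
  apply sum_eq; intros j Hj; rewrite KL by auto; reflexivity.
Qed.

Lemma psd_on_rank_one (f : T -> R) : psd_on P (fun x y => f x * f y).
Proof.
  intros k x c _.
  set (S := sum_f_R0 (fun j => c j * f (x j)) k).
  replace (sum_f_R0 _ k) with (S * S); [apply Rle_0_sqr|].
  unfold S at 2; rewrite scal_sum; apply sum_eq; intros i _.
  unfold S; rewrite scal_sum; apply sum_eq; intros j _; ring.
Qed.

Lemma psd_on_plus (K L : T -> T -> R) :
  psd_on P K -> psd_on P L -> psd_on P (fun x y => K x y + L x y).
Proof.
  intros HK HL k x c Hx.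
  replace (sum_f_R0 _ k) with
    (sum_f_R0 (fun i => sum_f_R0 (fun j => c i * c j * K (x i) (x j)) k) k +
     sum_f_R0 (fun i => sum_f_R0 (fun j => c i * c j * L (x i) (x j)) k) k).
  - apply Rplus_le_le_0_compat; [apply (HK k x c Hx) | apply (HL k x c Hx)].
  - rewrite <- sum_plus; apply sum_eq; intros i _.
    rewrite <- sum_plus; apply sum_eq; intros j _; ring.
Qed.

Lemma psd_on_scal (a : R) (K : T -> T -> R) :
  0 <= a -> psd_on P K -> psd_on P (fun x y => a * K x y).
Proof.
  intros Ha HK k x c Hx.
  replace (sum_f_R0 _ k) with
    (a * sum_f_R0 (fun i => sum_f_R0 (fun j => c i * c j * K (x i) (x j)) k) k).
  - apply Rmult_le_pos; [exact Ha | apply (HK k x c Hx)].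
  - rewrite scal_sum; apply sum_eq; intros i _.
    cbv beta; rewrite Rmult_comm, scal_sum; apply sum_eq; intros j _; ring.
Qed.

Lemma psd_on_sum (K : nat -> T -> T -> R) M :
  (forall m, psd_on P (K m)) -> psd_on P (fun x y => sum_f_R0 (fun m => K m x y) M).
Proof.
  intro HK; induction M as [|M IH]; [apply HK|].
  apply psd_on_plus; [exact IH | apply HK].
Qed.

Lemma psd_on_rescale (g : T -> R) (K : T -> T -> R) :
  psd_on P K -> psd_on P (fun x y => g x * g y * K x y).
Proof.
  intros HK k x c Hx.
  erewrite sum_eq; [apply (HK k x (fun i => c i * g (x i)) Hx)|]; intros i _.
  apply sum_eq; intros j _; ring.
Qed.

Lemma psd_on_series (K : nat -> T -> T -> R) :
  (forall n, psd_on P (K n)) ->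
  (forall x y, P x -> P y -> ex_series (fun n => K n x y)) ->
  psd_on P (fun x y => Series (fun n => K n x y)).
Proof.
  intros HK Hex k x c Hx.
  set (F i j n := c i * c j * K n (x i) (x j)).
  assert (HF : forall i j, (i <= k)%nat -> (j <= k)%nat -> ex_series (F i j)).
  { intros i j Hi Hj; apply (ex_series_scal_l (V := R_NormedModule)); auto. }
  erewrite sum_eq; cycle 1.
  { intros i Hi; erewrite sum_eq; [|intros j _; rewrite <- Series_scal_l; reflexivity].
    apply (Series_sum_f_R0 (F i)); auto. }
  rewrite Series_sum_f_R0 by (intros; apply ex_series_sum_f_R0; auto).
  assert (Series_zero : Series (fun _ => 0) = 0).
  { transitivity (Series (fun _ => 0 * 1)); [apply Series_ext; intro; ring|].
    rewrite Series_scal_l; ring. }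
  rewrite <- Series_zero; apply Series_le.
  - intro n; split; [lra|]; apply (HK n k x c Hx).
  - apply ex_series_sum_f_R0; intros; apply ex_series_sum_f_R0; auto.
Qed.

Lemma psd_on_abs_le_1 (K : T -> T -> R) x y :
  psd_on P K -> P x -> P y -> K x x = 1 -> K y y = 1 -> K y x = K x y ->
  Rabs (K x y) <= 1.
Proof.
  intros HK Px Py Kxx Kyy Ksym.
  pose proof (HK 1%nat (fun i => match i with O => x | _ => y end)
                (fun i => match i with O => - K x y | _ => 1 end)
                ltac:(intros [|[|i]] Hi; simpl; auto; lia)) as H.
  simpl in H; rewrite Kxx, Kyy, Ksym in H.
  apply Rabs_le; split; nra.
Qed.

End PsdKernels.

(** * Legendre polynomials and their derivatives *)

Lemma legendre_SS n t :
  (INR n + 2) * legendre (S (S n)) t =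
  (2 * INR n + 3) * t * legendre (S n) t - (INR n + 1) * legendre n t.
Proof.
  unfold legendre; simpl.
  destruct (legendre_pair n t) as [p q]; simpl.
  field; pose proof (pos_INR n); lra.
Qed.

Lemma legendre_at_1 n : legendre n 1 = 1.
Proof.
  enough (H : legendre n 1 = 1 /\ legendre (S n) 1 = 1) by apply H.
  induction n as [|n [IH0 IH1]]; [split; reflexivity|].
  split; [exact IH1|].
  pose proof (legendre_SS n 1) as E; rewrite IH0, IH1 in E.
  pose proof (pos_INR n).
  apply Rmult_eq_reg_l with (INR n + 2); lra.
Qed.

(* [legendre_deriv n m s] is the m-th derivative of P_n at s: the recursion is
   the m-fold derivative of P'_(n+1) = x P'_n + (n+1) P_n.  Only the recursion
   itself is used below. *)
Fixpoint legendre_deriv (n m : nat) (s : R) {struct n} : R :=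
  match n, m with
  | O, O => 1
  | O, S _ => 0
  | S _, O => legendre n s
  | S n', S m' => s * legendre_deriv n' m s + INR (n' + m' + 1) * legendre_deriv n' m' s
  end.

Section LegendreDerivatives.

Variable s : R.
Local Notation Q n m := (legendre_deriv n m s).

Lemma legendre_deriv_0 n : Q n 0 = legendre n s.
Proof. now destruct n. Qed.

Lemma legendre_deriv_S n m :
  Q (S n) (S m) = s * Q n (S m) + (INR n + INR m + 1) * Q n m.
Proof. simpl. now rewrite <- plus_INR, <- S_INR, Nat.add_1_r. Qed.

Lemma legendre_deriv_gt n m : (n < m)%nat -> Q n m = 0.
Proof.
  revert m; induction n as [|n IH]; intros [|m] Hm; try lia; [reflexivity|].
  rewrite legendre_deriv_S, !IH by lia; ring.
Qed.

Lemma legendre_deriv_bonnet_of_shift n :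
  (forall m, s * Q (S n) (S m) - Q n (S m) = (INR (S n) - INR m) * Q (S n) m) ->
  forall m, (INR (S n) - INR m + 1) * Q (S (S n)) m + (INR (S n) + INR m) * Q n m
            = (2 * INR (S n) + 1) * s * Q (S n) m.
Proof.
  intros shift [|m].
  - rewrite !legendre_deriv_0, !S_INR; simpl INR.
    pose proof (legendre_SS n s); lra.
  - assert (Hm : Q n (S m) = s * Q (S n) (S m) - (INR (S n) - INR m) * Q (S n) m)
      by (pose proof (shift m); lra).
    rewrite (legendre_deriv_S (S n) m), Hm, !S_INR.
    ring.
Qed.

Lemma legendre_deriv_shift n m :
  s * Q (S n) (S m) - Q n (S m) = (INR (S n) - INR m) * Q (S n) m.
Proof.
  revert m; induction n as [|n IH]; intro m.
  - destruct m as [|[|m]].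
    + simpl; unfold legendre; simpl; ring.
    + simpl; ring.
    + rewrite !legendre_deriv_gt by lia; ring.
  - pose proof (legendre_deriv_bonnet_of_shift n IH m) as bonnet.
    assert (E1 : s * Q (S n) (S m) = Q n (S m) + (INR (S n) - INR m) * Q (S n) m)
      by (pose proof (IH m); lra).
    pose proof (legendre_deriv_S n m) as E2.
    rewrite (legendre_deriv_S (S n) m).
    replace (s * (s * Q (S n) (S m) + (INR (S n) + INR m + 1) * Q (S n) m) - Q (S n) (S m))
      with (s * (s * Q (S n) (S m)) + (INR (S n) + INR m + 1) * s * Q (S n) m - Q (S n) (S m))
      by ring.
    rewrite E1, E2, !S_INR in *.
    lra.
Qed.

Lemma one_minus_sq_legendre_deriv n m :
  (1 - s * s) * Q (S n) (S m) =
  (INR (S n) + INR m) * Q n m - (INR (S n) - INR m) * s * Q (S n) m.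
Proof.
  assert (sA : s * Q (S n) (S m) = Q n (S m) + (INR (S n) - INR m) * Q (S n) m)
    by (pose proof (legendre_deriv_shift n m); lra).
  replace ((1 - s * s) * Q (S n) (S m)) with (Q (S n) (S m) - s * (s * Q (S n) (S m)))
    by ring.
  rewrite sA, legendre_deriv_S, S_INR.
  ring.
Qed.

(* The m-th derivative of Legendre's equation (1 - x^2) P'' - 2 x P' + n (n+1) P = 0. *)
Lemma legendre_deriv_ode n m :
  (1 - s * s) * Q n (S (S m)) =
  2 * (INR m + 1) * s * Q n (S m) - (INR n - INR m) * (INR n + INR m + 1) * Q n m.
Proof.
  destruct n as [|n].
  - rewrite !legendre_deriv_gt by lia.
    destruct m; [simpl; ring | rewrite legendre_deriv_gt by lia; ring].
  - rewrite one_minus_sq_legendre_deriv.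
    assert (Hb : Q n (S m) = s * Q (S n) (S m) - (INR (S n) - INR m) * Q (S n) m)
      by (pose proof (legendre_deriv_shift n m); lra).
    rewrite Hb, !S_INR.
    ring.
Qed.

End LegendreDerivatives.

(** * The addition theorem *)

Definition fact_ratio (n m : nat) : R := INR (fact (n - m)) / INR (fact (n + m)).

Lemma fact_ratio_0 n : fact_ratio n 0 = 1.
Proof.
  unfold fact_ratio; rewrite Nat.sub_0_r, Nat.add_0_r.
  field; apply INR_fact_neq_0.
Qed.

Lemma INR_fact_S k : INR (fact (S k)) = INR (S k) * INR (fact k).
Proof. now rewrite <- mult_INR. Qed.

Lemma fact_ratio_succ_deg n m : (m <= n)%nat ->
  fact_ratio (S n) m = fact_ratio n m * (INR n + 1 - INR m) / (INR n + 1 + INR m).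
Proof.
  intro Hmn; unfold fact_ratio.
  replace (S n - m)%nat with (S (n - m)) by lia.
  replace (S n + m)%nat with (S (n + m)) by lia.
  rewrite !INR_fact_S, !S_INR, minus_INR, plus_INR by exact Hmn.
  pose proof (INR_fact_neq_0 (n - m)); pose proof (INR_fact_neq_0 (n + m)).
  pose proof (pos_INR n); pose proof (pos_INR m); pose proof (le_INR _ _ Hmn).
  field; repeat split; lra.
Qed.

Lemma fact_ratio_pred_deg n m : (m <= n)%nat ->
  fact_ratio n m = fact_ratio (S n) m * (INR n + 1 + INR m) / (INR n + 1 - INR m).
Proof.
  intro Hmn; rewrite (fact_ratio_succ_deg n m Hmn).
  pose proof (pos_INR m); pose proof (le_INR _ _ Hmn).
  field; lra.
Qed.

Lemma fact_ratio_pred_ord n m : (m < n)%nat ->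
  fact_ratio n m = fact_ratio n (S m) * (INR n - INR m) * (INR n + INR m + 1).
Proof.
  intro Hmn; unfold fact_ratio.
  replace (n - m)%nat with (S (n - S m)) by lia.
  replace (n + S m)%nat with (S (n + m)) by lia.
  rewrite !INR_fact_S, !S_INR, minus_INR, plus_INR by lia.
  pose proof (INR_fact_neq_0 (n - S m)); pose proof (INR_fact_neq_0 (n + m)).
  pose proof (pos_INR n); pose proof (pos_INR m).
  rewrite S_INR; field; lra.
Qed.

Lemma fact_ratio_succ_ord n m : (m < n)%nat ->
  fact_ratio n (S m) = fact_ratio n m / ((INR n - INR m) * (INR n + INR m + 1)).
Proof.
  intro Hmn; rewrite (fact_ratio_pred_ord n m Hmn).
  pose proof (pos_INR m); pose proof (lt_INR _ _ Hmn).
  field; lra.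
Qed.

Lemma fact_ratio_diag n :
  fact_ratio (S n) (S n) = fact_ratio n n / ((2 * INR n + 2) * (2 * INR n + 1)).
Proof.
  unfold fact_ratio; rewrite !Nat.sub_diag.
  replace (S n + S n)%nat with (S (S (n + n))) by lia.
  rewrite !INR_fact_S, !S_INR, plus_INR.
  pose proof (INR_fact_neq_0 (n + n)); pose proof (pos_INR n).
  simpl (INR (fact 0)).
  field; lra.
Qed.

Definition addition_weight (n m : nat) : R :=
  match m with O => 1 | S _ => 2 * fact_ratio n m end.

Definition addition_coef (s t : R) (n m : nat) : R :=
  addition_weight n m * legendre_deriv n m s * legendre_deriv n m t.

(* The coefficients of rho * sum_m c_m E_m in the basis E_m, when
   rho E_0 = E_1 and 2 rho E_(k+1) = E_(k+2) + p E_k. *)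
Definition shift_coef (p : R) (c : nat -> R) (m : nat) : R :=
  match m with
  | O => p * c 1%nat / 2
  | S O => c O + p * c 2%nat / 2
  | S (S k) => c (S k) / 2 + p * c (S (S (S k))) / 2
  end.

Section AdditionCoefficients.

Variables s t : R.
Local Notation Q n m x := (legendre_deriv n m x).
Local Notation c := (addition_coef s t).
Local Notation p := ((1 - s * s) * (1 - t * t)).

Lemma addition_coef_gt n m : (n < m)%nat -> c n m = 0.
Proof. intro H; unfold addition_coef; rewrite !legendre_deriv_gt by exact H; ring. Qed.

Lemma shift_coef_addition_S n m :
  shift_coef p (c n) (S m) =
  fact_ratio n m * Q n m s * Q n m t
  + fact_ratio n (S (S m)) * ((1 - s * s) * Q n (S (S m)) s) * ((1 - t * t) * Q n (S (S m)) t).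
Proof.
  unfold addition_coef, addition_weight.
  destruct m as [|m]; simpl shift_coef; [rewrite fact_ratio_0|]; field.
Qed.

Lemma addition_coef_rec_0 n :
  INR (S (S n)) * c (S (S n)) 0 =
  (2 * INR (S n) + 1) * (s * t * c (S n) 0 + shift_coef p (c (S n)) 0) - INR (S n) * c n 0.
Proof.
  assert (lower : forall x, legendre n x =
            x * legendre (S n) x + (1 - x * x) * Q (S n) 1 x / INR (S n)).
  { intro x; pose proof (one_minus_sq_legendre_deriv x n 0) as E.
    rewrite !legendre_deriv_0, Rplus_0_r, Rminus_0_r in E.
    rewrite E; field.
    pose proof (pos_INR n); rewrite S_INR; lra. }
  assert (upper : forall x, legendre (S (S n)) x =
            x * legendre (S n) x - (1 - x * x) * Q (S n) 1 x / INR (S (S n))).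
  { intro x; pose proof (legendre_SS n x) as E; rewrite lower in E.
    pose proof (pos_INR n); rewrite !S_INR in *.
    apply Rmult_eq_reg_l with (INR n + 2); [rewrite E; field|]; lra. }
  unfold addition_coef, addition_weight, shift_coef; cbv beta iota.
  rewrite !legendre_deriv_0, (lower s), (lower t), (upper s), (upper t).
  rewrite fact_ratio_succ_ord, fact_ratio_0 by lia.
  pose proof (pos_INR n); rewrite !S_INR.
  change (INR 0) with 0; field; lra.
Qed.

Lemma addition_coef_rec_mid n m : (m < n)%nat ->
  INR (S (S n)) * c (S (S n)) (S m) =
  (2 * INR (S n) + 1) * (s * t * c (S n) (S m) + shift_coef p (c (S n)) (S m))
  - INR (S n) * c n (S m).
Proof.
  intro Hmn.
  assert (lower : forall x, Q n (S m) x =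
            x * Q (S n) (S m) x - (INR (S n) - INR m) * Q (S n) m x)
    by (intro x; pose proof (legendre_deriv_shift x n m); lra).
  rewrite shift_coef_addition_S, !legendre_deriv_ode.
  unfold addition_coef, addition_weight.
  rewrite (legendre_deriv_S s (S n) m), (legendre_deriv_S t (S n) m), (lower s), (lower t).
  rewrite (fact_ratio_succ_deg (S n) (S m)), (fact_ratio_pred_ord (S n) m),
    (fact_ratio_succ_ord (S n) (S m)), (fact_ratio_pred_deg n (S m)) by lia.
  pose proof (pos_INR m); pose proof (lt_INR _ _ Hmn).
  rewrite !S_INR.
  set (N := INR n) in *; set (M := INR m) in *.
  field; lra.
Qed.

Lemma addition_coef_rec_diag n :
  INR (S (S n)) * c (S (S n)) (S n) =
  (2 * INR (S n) + 1) * (s * t * c (S n) (S n) + shift_coef p (c (S n)) (S n))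
  - INR (S n) * c n (S n).
Proof.
  assert (diag_pred : forall x, Q (S n) n x = x * Q (S n) (S n) x).
  { intro x; pose proof (legendre_deriv_shift x n n) as E.
    rewrite (legendre_deriv_gt x n (S n)), !S_INR in E by lia; lra. }
  rewrite shift_coef_addition_S, (addition_coef_gt n) by lia.
  unfold addition_coef, addition_weight.
  rewrite (legendre_deriv_S s (S n) n), (legendre_deriv_S t (S n) n),
    !(legendre_deriv_gt _ (S n) (S (S n))), !diag_pred by lia.
  rewrite (fact_ratio_succ_deg (S n) (S n)), (fact_ratio_pred_ord (S n) n) by lia.
  pose proof (pos_INR n); rewrite !S_INR; set (N := INR n) in *.
  field; lra.
Qed.

Lemma addition_coef_rec_diag_succ n :
  INR (S (S n)) * c (S (S n)) (S (S n)) =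
  (2 * INR (S n) + 1) * (s * t * c (S n) (S (S n)) + shift_coef p (c (S n)) (S (S n)))
  - INR (S n) * c n (S (S n)).
Proof.
  rewrite shift_coef_addition_S, (addition_coef_gt (S n)), (addition_coef_gt n) by lia.
  unfold addition_coef, addition_weight.
  rewrite (legendre_deriv_S s (S n) (S n)), (legendre_deriv_S t (S n) (S n)),
    !(legendre_deriv_gt _ (S n) (S (S _))) by lia.
  pose proof (pos_INR n); rewrite fact_ratio_diag, !S_INR; set (N := INR n) in *.
  field; lra.
Qed.

Lemma addition_coef_rec n m :
  INR (S (S n)) * c (S (S n)) m =
  (2 * INR (S n) + 1) * (s * t * c (S n) m + shift_coef p (c (S n)) m)
  - INR (S n) * c n m.
Proof.
  destruct m as [|m]; [apply addition_coef_rec_0|].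
  destruct (Nat.lt_trichotomy m n) as [Hlt | [-> | Hgt]];
    [now apply addition_coef_rec_mid | apply addition_coef_rec_diag|].
  destruct (Nat.eq_dec m (S n)) as [-> | Hne]; [apply addition_coef_rec_diag_succ|].
  rewrite shift_coef_addition_S, !addition_coef_gt, !(legendre_deriv_gt _ (S n)) by lia.
  ring.
Qed.

End AdditionCoefficients.

Lemma sum_f_R0_extend (f : nat -> R) N d :
  (forall m, (N < m)%nat -> f m = 0) -> sum_f_R0 f (N + d) = sum_f_R0 f N.
Proof.
  intro Hf; induction d as [|d IH]; [now rewrite Nat.add_0_r|].
  rewrite Nat.add_succ_r; simpl; rewrite IH, Hf by lia; ring.
Qed.

Lemma sum_f_R0_lincomb (a b d : R) (f g h : nat -> R) N :
  sum_f_R0 (fun m => a * (b * f m + g m) - d * h m) N =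
  a * (b * sum_f_R0 f N + sum_f_R0 g N) - d * sum_f_R0 h N.
Proof. induction N as [|N IH]; simpl; [|rewrite IH]; ring. Qed.

Lemma sum_shift_coef (rho p : R) (E c : nat -> R) :
  E 1%nat = rho * E 0%nat -> (forall k, E (S (S k)) = 2 * rho * E (S k) - p * E k) ->
  forall M, rho * sum_f_R0 (fun m => c m * E m) M =
    sum_f_R0 (fun m => shift_coef p c m * E m) (S M)
    - p * c (S M) / 2 * E M - p * c (S (S M)) / 2 * E (S M).
Proof.
  intros E1 ESS M; induction M as [|M IH].
  - simpl; rewrite E1; field.
  - rewrite tech5, Rmult_plus_distr_l, IH, (tech5 _ (S M)); simpl shift_coef.
    rewrite (ESS M); field.
Qed.

Lemma Re_Cpow_SS (z : C) k :
  Re (Cpow z (S (S k))) =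
  2 * Re z * Re (Cpow z (S k)) - (Re z * Re z + Im z * Im z) * Re (Cpow z k).
Proof.
  rewrite !Cpow_S; destruct (Cpow z k) as [a b], z as [x y].
  unfold Re, Im, Cmult; simpl; ring.
Qed.

Definition addition_sum (s t : R) (z : C) (n : nat) : R :=
  sum_f_R0 (fun m => addition_coef s t n m * Re (Cpow z m)) n.

Section AdditionSum.

Variables (s t : R) (z : C).
Hypothesis z_norm : Re z * Re z + Im z * Im z = (1 - s * s) * (1 - t * t).
Local Notation Sum := (addition_sum s t z).
Local Notation E m := (Re (Cpow z m)).

Lemma addition_sum_extend n d :
  Sum n = sum_f_R0 (fun m => addition_coef s t n m * E m) (n + d).
Proof.
  symmetry; apply sum_f_R0_extend; intros m Hm.
  rewrite addition_coef_gt by exact Hm; ring.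
Qed.

Lemma addition_sum_rec n :
  INR (S (S n)) * Sum (S (S n)) =
  (2 * INR (S n) + 1) * (s * t + Re z) * Sum (S n) - INR (S n) * Sum n.
Proof.
  set (c := addition_coef s t); set (p := (1 - s * s) * (1 - t * t)).
  assert (shift : Re z * Sum (S n) =
            sum_f_R0 (fun m => shift_coef p (c (S n)) m * E m) (S (S (S n)))).
  { rewrite (addition_sum_extend (S n) 1), Nat.add_1_r.
    rewrite (sum_shift_coef (Re z) p (fun m => E m)); cycle 1.
    - unfold Re; simpl; ring.
    - intro k; rewrite Re_Cpow_SS, z_norm; reflexivity.
    - unfold c; rewrite !addition_coef_gt by lia; unfold Rdiv; ring. }
  replace ((2 * INR (S n) + 1) * (s * t + Re z) * Sum (S n))
    with ((2 * INR (S n) + 1) * (s * t * Sum (S n) + Re z * Sum (S n))) by ring.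
  rewrite shift, (addition_sum_extend (S (S n)) 1), (addition_sum_extend (S n) 2),
    (addition_sum_extend n 3).
  replace (S (S n) + 1)%nat with (S (S (S n))) by lia.
  replace (S n + 2)%nat with (S (S (S n))) by lia.
  replace (n + 3)%nat with (S (S (S n))) by lia.
  rewrite <- sum_f_R0_lincomb, scal_sum.
  apply sum_eq; intros m _; cbv beta.
  transitivity (INR (S (S n)) * addition_coef s t (S (S n)) m * E m); [ring|].
  rewrite addition_coef_rec; unfold c, p; ring.
Qed.

Theorem legendre_addition n : legendre n (s * t + Re z) = Sum n.
Proof.
  enough (H : legendre n (s * t + Re z) = Sum n /\
              legendre (S n) (s * t + Re z) = Sum (S n)) by apply H.
  induction n as [|n [IH0 IH1]].
  - unfold addition_sum, addition_coef, addition_weight, fact_ratio, Re; simpl.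
    unfold legendre; simpl; split; field.
  - split; [exact IH1|].
    pose proof (pos_INR n).
    apply Rmult_eq_reg_l with (INR (S (S n))); [|rewrite !S_INR; lra].
    rewrite addition_sum_rec, <- IH0, <- IH1, !S_INR.
    replace (INR n + 1 + 1) with (INR n + 2) by ring.
    rewrite legendre_SS; ring.
Qed.

End AdditionSum.

(** * Legendre kernels on the sphere *)

Lemma addition_weight_nonneg n m : 0 <= addition_weight n m.
Proof.
  destruct m; simpl; [lra|].
  apply Rmult_le_pos; [lra|].
  unfold fact_ratio, Rdiv; apply Rmult_le_pos; [apply pos_INR|].
  left; apply Rinv_0_lt_compat, INR_fact_lt_0.
Qed.

Lemma Re_Cpow_mul_conj (z w : C) m :
  Re (Cpow (z * Cconj w) m) = Re (Cpow z m) * Re (Cpow w m) + Im (Cpow z m) * Im (Cpow w m).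
Proof.
  rewrite Cpow_mult_l, <- Cpow_conj.
  destruct (Cpow z m), (Cpow w m); unfold Re, Im, Cconj, Cmult; simpl; ring.
Qed.

Lemma norm2_mul_conj (z w : C) :
  Re (z * Cconj w) * Re (z * Cconj w) + Im (z * Cconj w) * Im (z * Cconj w) =
  (Re z * Re z + Im z * Im z) * (Re w * Re w + Im w * Im w).
Proof. destruct z, w; unfold Re, Im, Cconj, Cmult; simpl; ring. Qed.

(* A point of R^3 is read as a complex number [fst p] and a height [snd p]. *)
Lemma dot3_complex p q : dot3 p q = snd p * snd q + Re (fst p * Cconj (fst q)).
Proof. destruct p as [[p1 p2] p3], q as [[q1 q2] q3]; unfold Re, Cconj, Cmult; simpl; ring. Qed.

Lemma dot3_comm p q : dot3 p q = dot3 q p.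
Proof. destruct p as [[p1 p2] p3], q as [[q1 q2] q3]; simpl; ring. Qed.

Lemma on_sphere_complex p :
  on_sphere p -> Re (fst p) * Re (fst p) + Im (fst p) * Im (fst p) = 1 - snd p * snd p.
Proof. destruct p as [[p1 p2] p3]; unfold on_sphere, Re, Im; simpl; lra. Qed.

Lemma legendre_sphere_expansion n p q : on_sphere p -> on_sphere q ->
  legendre n (dot3 p q) =
  sum_f_R0 (fun m => addition_weight n m *
    (legendre_deriv n m (snd p) * Re (Cpow (fst p) m) *
       (legendre_deriv n m (snd q) * Re (Cpow (fst q) m)) +
     legendre_deriv n m (snd p) * Im (Cpow (fst p) m) *
       (legendre_deriv n m (snd q) * Im (Cpow (fst q) m)))) n.
Proof.
  intros Hp Hq.
  rewrite dot3_complex, legendre_addition.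
  - unfold addition_sum, addition_coef; apply sum_eq; intros m _.
    rewrite Re_Cpow_mul_conj; ring.
  - now rewrite norm2_mul_conj, !on_sphere_complex.
Qed.

Theorem legendre_psd_on_sphere n : psd_on on_sphere (fun p q => legendre n (dot3 p q)).
Proof.
  eapply psd_on_ext; [intros p q; apply legendre_sphere_expansion|].
  apply psd_on_sum; intro m.
  apply psd_on_scal; [apply addition_weight_nonneg|].
  apply psd_on_plus; apply psd_on_rank_one.
Qed.

Lemma legendre_abs_le_1_on_sphere n p q : on_sphere p -> on_sphere q ->
  Rabs (legendre n (dot3 p q)) <= 1.
Proof.
  intros Hp Hq.
  apply (psd_on_abs_le_1 on_sphere (fun p q => legendre n (dot3 p q)));
    auto using legendre_psd_on_sphere.
  - now rewrite Hp, legendre_at_1.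
  - now rewrite Hq, legendre_at_1.
  - now rewrite dot3_comm.
Qed.

Lemma sqrt_mul_le_half_sum u v : 0 <= u -> 0 <= v -> sqrt (u * v) <= (u + v) / 2.
Proof.
  intros Hu Hv; rewrite sqrt_mult by assumption.
  pose proof (sqrt_sqrt u Hu); pose proof (sqrt_sqrt v Hv).
  pose proof (Rle_0_sqr (sqrt u - sqrt v)); unfold Rsqr in *.
  nra.
Qed.

Lemma ex_series_sqrt_mul_bounded (u v e : nat -> R) :
  (forall n, 0 <= u n) -> (forall n, 0 <= v n) -> ex_series u -> ex_series v ->
  (forall n, Rabs (e n) <= 1) -> ex_series (fun n => sqrt (u n * v n) * e n).
Proof.
  intros Hu Hv Su Sv He.
  apply (ex_series_le (K := R_AbsRing) (V := R_CompleteNormedModule))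
    with (fun n => / 2 * (u n + v n)).
  - intro n; change (norm _) with (Rabs (sqrt (u n * v n) * e n)).
    rewrite Rabs_mult, (Rabs_pos_eq (sqrt _)) by apply sqrt_pos.
    pose proof (He n); pose proof (sqrt_pos (u n * v n)).
    pose proof (sqrt_mul_le_half_sum (u n) (v n) (Hu n) (Hv n)).
    nra.
  - apply (ex_series_scal_l (V := R_NormedModule)).
    now apply (ex_series_plus (V := R_NormedModule)).
Qed.

Theorem Ccov_psd_on_sphere (b : nat -> R3 -> R) :
  (forall n x, on_sphere x -> 0 <= b n x) ->
  (forall x, on_sphere x -> ex_series (fun n => b n x)) ->
  psd_on on_sphere (Ccov b).
Proof.
  intros b_nonneg b_sum.
  assert (split_sqrt : forall n p q, on_sphere p -> on_sphere q ->
            sqrt (b n p * b n q) = sqrt (b n p) * sqrt (b n q))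
    by (intros; apply sqrt_mult; auto).
  apply psd_on_ext with
    (fun p q => Series (fun n => sqrt (b n p) * sqrt (b n q) * legendre n (dot3 p q))).
  { intros p q Hp Hq; apply Series_ext; intro n; now rewrite split_sqrt. }
  apply psd_on_series.
  - intro n; apply psd_on_rescale, legendre_psd_on_sphere.
  - intros p q Hp Hq.
    apply ex_series_ext with (fun n => sqrt (b n p * b n q) * legendre n (dot3 p q));
      [intro n; now rewrite split_sqrt|].
    apply ex_series_sqrt_mul_bounded; auto.
    intro n; now apply legendre_abs_le_1_on_sphere.
Qed.

Theorem mainTheorem1 (b : nat -> R3 -> R)
  (hb_nonneg : forall n x, on_sphere x -> 0 <= b n x)
  (hb_sum : forall x, on_sphere x -> ex_series (fun n => b n x)) :
  forall (k : nat) (x : nat -> R3) (a : nat -> R), (1 <= k)%nat ->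
    (forall i, (i < k)%nat -> on_sphere (x i)) ->
    0 <= sum_n (fun i => sum_n (fun j =>
            a i * a j * Ccov b (x i) (x j)) (k - 1)) (k - 1).
Proof.
  intros k x a Hk Hx.
  rewrite sum_n_Reals, (sum_eq _ (fun i => sum_f_R0 (fun j =>
            a i * a j * Ccov b (x i) (x j)) (k - 1))) by (intros; apply sum_n_Reals).
  apply Ccov_psd_on_sphere; auto.
  intros i Hi; apply Hx; lia.
Qed.
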